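(* Let $N\ge1$, $n\ge1$, and for $i=1,\dots,N$ let $\mathrm{FTA}_i\in[0,1)$ and $\mathrm{FAR}_i$ be such that $\mathrm{FMR}_i=\mathrm{FAR}_i/(1-\mathrm{FTA}_i)\in(0,1)$. Suppose an outsider attacker submits guesses each succeeding independently with probability $p=1-\prod_{i=1}^N(1-\mathrm{FMR}_i)$. Then the median number $m_{out}$ of trials for the attacker to successfully impersonate a user satisfies $$m_{out}=\Omega\left(2^{-\log_2\left(\sum_{i=1}^N\frac{\mathrm{FAR}_i}{1-\mathrm{FTA}_i}\left(1+\frac{\mathrm{FAR}_i}{1-\mathrm{FTA}_i}\right)\right)}\right)\quad\text{and}\quad m_{out}=O\left(2^{-\log_2\left(\sum_{i=1}^N\frac{\mathrm{FAR}_i}{1-\mathrm{FTA}_i}\right)}\right).$$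
   Context: For user $i$: $\mathrm{FMR}_i$ is the False Match Rate (probability an impostor guess is wrongly matched to user $i$), $\mathrm{FTA}_i$ is the Failure To Acquire rate, and $\mathrm{FAR}_i$ the False Acceptance Rate, related by $\mathrm{FAR}_i=\mathrm{FMR}_i(1-\mathrm{FTA}_i)$. The median of the number of trials until the first success of independent trials with success probability $p$ is taken to be $-1/\log_2(1-p)$. *)

From Stdlib Require Import Reals.
Open Scope R_scope.

(* finite sum / product over indices 0 .. N-1 (users i = 1..N of the paper) *)
Fixpoint sumR (f : nat -> R) (N : nat) : R :=
  match N with O => 0 | S k => sumR f k + f k end.
Fixpoint prodR (f : nat -> R) (N : nat) : R :=
  match N with O => 1 | S k => prodR f k * f k end.

Definition log2 (x : R) : R := ln x / ln 2.

Definition FMR (FTA FAR : nat -> R) (i : nat) : R := FAR i / (1 - FTA i).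

Definition attack_prob (N : nat) (fmr : nat -> R) : R :=
  1 - prodR (fun i => 1 - fmr i) N.

(* median number of trials until first success, per the paper's convention *)
Definition median_trials (p : R) : R := - 1 / log2 (1 - p).

(** With [f i = FMR_i], the median is [ln 2 / L] where
    [L = - ln (prod (1 - f i)) = - sum ln (1 - f i)].  Termwise
    [x <= - ln (1 - x)] gives [sum f <= L], hence the [O] bound; for
    [x <= 1/2] also [- ln (1 - x) <= 2 x], so [L <= 2 sum f <= 2 sum f (1 + f)],
    hence the [Omega] bound with constant [ln 2 / 2]. *)
From Stdlib Require Import Reals Lra Lia.
Open Scope R_scope.

Lemma ln_le x y : 0 < x -> x <= y -> ln x <= ln y.
Proof.
  intros Hx [Hxy | <-].
  - left; apply ln_increasing; assumption.
  - right; reflexivity.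
Qed.

Lemma ln_2_pos : 0 < ln 2.
Proof. pose proof ln_lt_2; lra. Qed.

Lemma ln_1_sub_le x : x < 1 -> ln (1 - x) <= - x.
Proof.
  intros Hx. rewrite <- (ln_exp (- x)).
  apply ln_le; [lra |]. pose proof (exp_ineq1_le (- x)); lra.
Qed.

(* [ln (1 - x) = - ln (1 + y)] with [y = x / (1 - x) <= 2 x], and [ln (1 + y) <= y]. *)
Lemma ln_1_sub_ge x : 0 <= x <= / 2 -> - (2 * x) <= ln (1 - x).
Proof.
  intros Hx.
  set (y := x / (1 - x)).
  assert (Hy : 1 + y = / (1 - x)) by (unfold y; field; lra).
  assert (Hy_le : y <= 2 * x).
  { unfold y. apply Rmult_le_reg_r with (1 - x); [lra |].
    unfold Rdiv. rewrite Rmult_assoc, Rinv_l by lra. nra. }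
  assert (Hln : ln (1 + y) <= y).
  { rewrite <- (ln_exp y) at 2. apply ln_le; [rewrite Hy; apply Rinv_0_lt_compat; lra |].
    apply exp_ineq1_le. }
  rewrite Hy, ln_Rinv in Hln by lra. lra.
Qed.

Lemma sumR_le (f g : nat -> R) k :
  (forall i, (i < k)%nat -> f i <= g i) -> sumR f k <= sumR g k.
Proof.
  induction k as [| k IH]; intros Hfg; simpl; [lra |].
  apply Rplus_le_compat; [apply IH; intros i Hi |]; apply Hfg; lia.
Qed.

Lemma sumR_scal c (f : nat -> R) k : sumR (fun i => c * f i) k = c * sumR f k.
Proof. induction k as [| k IH]; simpl; [ring | rewrite IH; ring]. Qed.

Lemma sumR_pos (f : nat -> R) k :
  (1 <= k)%nat -> (forall i, (i < k)%nat -> 0 < f i) -> 0 < sumR f k.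
Proof.
  induction k as [| k IH]; intros Hk Hf; simpl; [lia |].
  assert (Hfk : 0 < f k) by (apply Hf; lia).
  destruct k as [| k]; [simpl; lra |].
  assert (0 < sumR f (S k)) by (apply IH; [lia | intros i Hi; apply Hf; lia]).
  lra.
Qed.

Lemma prodR_pos (f : nat -> R) k :
  (forall i, (i < k)%nat -> 0 < f i) -> 0 < prodR f k.
Proof.
  induction k as [| k IH]; intros Hf; simpl; [lra |].
  apply Rmult_lt_0_compat; [apply IH; intros i Hi |]; apply Hf; lia.
Qed.

Lemma ln_prodR (f : nat -> R) k :
  (forall i, (i < k)%nat -> 0 < f i) -> ln (prodR f k) = sumR (fun i => ln (f i)) k.
Proof.
  induction k as [| k IH]; intros Hf; simpl; [apply ln_1 |].
  assert (Hf' : forall i, (i < k)%nat -> 0 < f i) by (intros i Hi; apply Hf; lia).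
  assert (Hfk : 0 < f k) by (apply Hf; lia).
  rewrite ln_mult, IH by auto using prodR_pos. reflexivity.
Qed.

Lemma sumR_le_neg_ln_prodR_1_sub (f : nat -> R) k :
  (forall i, (i < k)%nat -> f i < 1) ->
  sumR f k <= - ln (prodR (fun i => 1 - f i) k).
Proof.
  intros Hf. rewrite ln_prodR by (intros i Hi; specialize (Hf i Hi); lra).
  cut (sumR (fun i => ln (1 - f i)) k <= sumR (fun i => -1 * f i) k);
    [rewrite sumR_scal; lra |].
  apply sumR_le. intros i Hi.
  pose proof (ln_1_sub_le (f i) (Hf i Hi)); lra.
Qed.

Lemma neg_ln_prodR_1_sub_le (f : nat -> R) k :
  (forall i, (i < k)%nat -> 0 <= f i <= / 2) ->
  - ln (prodR (fun i => 1 - f i) k) <= 2 * sumR f k.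
Proof.
  intros Hf. rewrite ln_prodR by (intros i Hi; specialize (Hf i Hi); lra).
  cut (sumR (fun i => -2 * f i) k <= sumR (fun i => ln (1 - f i)) k);
    [rewrite sumR_scal; lra |].
  apply sumR_le. intros i Hi.
  pose proof (ln_1_sub_ge (f i) (Hf i Hi)); lra.
Qed.

Lemma median_trials_eq p : median_trials p = ln 2 / - ln (1 - p).
Proof.
  unfold median_trials, log2, Rdiv.
  rewrite Rinv_mult, Rinv_inv, Rinv_opp. ring.
Qed.

Lemma Rpower_2_neg_log2 x : 0 < x -> Rpower 2 (- log2 x) = / x.
Proof.
  intros Hx. unfold Rpower, log2. pose proof ln_2_pos.
  replace (- (ln x / ln 2) * ln 2) with (ln (/ x)) by (rewrite ln_Rinv by lra; field; lra).
  apply exp_ln, Rinv_0_lt_compat, Hx.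
Qed.

Theorem proposition3p3 :
  exists c C delta : R, 0 < c /\ 0 < C /\ 0 < delta /\
  forall (N n : nat) (FTA FAR : nat -> R),
    (1 <= N)%nat -> (1 <= n)%nat ->
    (forall i, (i < N)%nat -> 0 <= FTA i < 1) ->
    (forall i, (i < N)%nat -> 0 < FAR i / (1 - FTA i) < 1) ->
    let m := median_trials (attack_prob N (FMR FTA FAR)) in
    (* m_out = O( 2^(-log2 (sum FAR_i/(1-FTA_i))) ) *)
    m <= C * Rpower 2 (- log2 (sumR (fun i => FAR i / (1 - FTA i)) N)) /\
    (* m_out = Omega( 2^(-log2 (sum f_i (1 + f_i))) ), in the regime FMR_i -> 0 *)
    ((forall i, (i < N)%nat -> FAR i / (1 - FTA i) < delta) ->
     c * Rpower 2 (- log2 (sumR (fun i => FAR i / (1 - FTA i) *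
                                  (1 + FAR i / (1 - FTA i))) N)) <= m).
Proof.
  pose proof ln_2_pos as Hln2.
  exists (ln 2 / 2), (ln 2), (/ 2).
  split; [lra | split; [lra | split; [lra |]]].
  intros N _ FTA FAR HN _ _ Hf m.
  set (f := fun i => FAR i / (1 - FTA i)).
  change (fun i => FAR i / (1 - FTA i) * (1 + FAR i / (1 - FTA i))) with
    (fun i => f i * (1 + f i)).
  set (L := - ln (prodR (fun i => 1 - f i) N)).
  assert (Hm : m = ln 2 / L).
  { unfold m, attack_prob. rewrite median_trials_eq. change (FMR FTA FAR) with f.
    replace (1 - (1 - prodR (fun i => 1 - f i) N)) with (prodR (fun i => 1 - f i) N)
      by ring.
    reflexivity. }
  assert (Hsum_pos : 0 < sumR f N) by (apply sumR_pos; [| intros i Hi; apply Hf]; assumption).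
  assert (Hsum_le_L : sumR f N <= L)
    by (apply sumR_le_neg_ln_prodR_1_sub; intros i Hi; apply Hf, Hi).
  assert (Hsum_le_sum_quad : sumR f N <= sumR (fun i => f i * (1 + f i)) N).
  { apply sumR_le. intros i Hi. specialize (Hf i Hi). nra. }
  rewrite Hm, !Rpower_2_neg_log2 by lra. split.
  - apply Rmult_le_compat_l, Rinv_le_contravar; lra.
  - intros Hsmall.
    assert (HL_le : L <= 2 * sumR f N).
    { apply neg_ln_prodR_1_sub_le. intros i Hi.
      specialize (Hf i Hi); specialize (Hsmall i Hi); unfold f; lra. }
    unfold Rdiv. rewrite Rmult_assoc, <- Rinv_mult.
    apply Rmult_le_compat_l, Rinv_le_contravar; lra.
Qed.
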